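(* Let $n\ge m\ge 1$ be integers, $N=nm+n+m$, and $d\in\{1,-1\}$. Put $s_1=m(m+3)/2$ and $s_2=(n-m)(m+1)$, and define integers $x_1,\dots,x_N$ recursively as follows. For $1\le i\le s_1$, with $\alpha=\lfloor\frac{\sqrt{8i+1}-1}{2}\rfloor$, $$x_i=n+1-(-1)^{\alpha}d\,(2i-\alpha(\alpha+2)).$$ For $s_1+1\le i\le s_1+s_2$, with $\beta=\lfloor\frac{i-s_1+m}{m+1}\rfloor$ and $p=i-s_1-(\beta-1)(m+1)$, $$x_i=x_{s_1}-\beta-(-1)^{m+\beta}d\,\bigl(2p-2-m(1+(-1)^{\beta})\bigr).$$ For $s_1+s_2+1\le i\le N$, with $\gamma=\lfloor m-\sqrt{m(m+1)-2(i-s_1-s_2)+9/4}+3/2\rfloor$ and $q=i-s_1-s_2-(\gamma-1)(m+1)+\gamma(\gamma-1)/2$, $$x_i=x_{s_1+s_2}-d\bigl((-1)^{n+\gamma}(\gamma+2q-m-2)-m(-1)^n\bigr).$$ Then starting from the initial configuration $b^nOw^m$ and, for $i=1,\dots,N$, moving in step $i$ the checker at position $x_i$ into the current vacancy, every step is a legal move, the final configuration $w^mOb^n$ is reached after step $N$, and hence this is an optimal move sequence (of the minimum possible length $nm+n+m$). Moreover $d=(n+1)-x_1$ is the direction of the first move.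
   Context: The game: positions $1,\dots,n+m+1$ in a row, each holding a black checker ($b$), a white checker ($w$) or nothing, with exactly one empty position (the vacancy $O$). Initial configuration $b^nOw^m$ (vacancy at position $n+1$), final configuration $w^mOb^n$. A legal move is a slide (a checker adjacent to the vacancy moves into it) or a jump (a checker at distance two from the vacancy jumps over the checker between them into it); after moving the checker at position $x_i$, position $x_i$ becomes the new vacancy. *)

From Stdlib Require Import ZArith Reals List.
Open Scope Z_scope.

Inductive cell := Bk | Wt | Vac.

(** A configuration: value of each position; only positions 1..L matter,
    where L = n+m+1 is the number of positions. *)
Definition config := Z -> cell.

Definition init_config (n m : Z) : config :=
  fun p => if (p <=? n) then Bk else if (p =? n + 1) then Vac else Wt.

Definition final_config (n m : Z) : config :=
  fun p => if (p <=? m) then Wt else if (p =? m + 1) then Vac else Bk.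

Definition same_on_board (L : Z) (c c' : config) : Prop :=
  forall p, 1 <= p <= L -> c p = c' p.

Definition legal_move (L : Z) (c : config) (x : Z) (c' : config) : Prop :=
  exists v,
    1 <= v <= L /\ c v = Vac /\
    1 <= x <= L /\ c x <> Vac /\
    (Z.abs (x - v) = 1 \/ (Z.abs (x - v) = 2 /\ c ((x + v) / 2) <> Vac)) /\
    c' = (fun p => if p =? v then c x else if p =? x then Vac else c p).

Inductive legal_run (L : Z) : config -> list Z -> config -> Prop :=
| run_nil : forall c, legal_run L c nil c
| run_cons : forall c x xs c1 c2,
    legal_move L c x c1 -> legal_run L c1 xs c2 -> legal_run L c (x :: xs) c2.

Definition rfloor (r : R) : Z := Int_part r.

Definition s1 (m : Z) : Z := m * (m + 3) / 2.
Definition s2 (n m : Z) : Z := (n - m) * (m + 1).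

Definition xA (n m d i : Z) : Z :=
  let alpha := rfloor ((sqrt (IZR (8 * i + 1)) - 1) / 2)%R in
  n + 1 - (-1) ^ alpha * d * (2 * i - alpha * (alpha + 2)).

Definition xB (n m d i : Z) : Z :=
  let beta := (i - s1 m + m) / (m + 1) in
  let p := i - s1 m - (beta - 1) * (m + 1) in
  xA n m d (s1 m) - beta
    - (-1) ^ (m + beta) * d * (2 * p - 2 - m * (1 + (-1) ^ beta)).

(** x_{s1+s2}, whichever block it lies in. *)
Definition x_mid (n m d : Z) : Z :=
  if s1 m + s2 n m <=? s1 m then xA n m d (s1 m + s2 n m)
  else xB n m d (s1 m + s2 n m).

Definition xC (n m d i : Z) : Z :=
  let gamma := rfloor (IZR m
       - sqrt (IZR (m * (m + 1)) - 2 * IZR (i - s1 m - s2 n m) + 9 / 4)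
       + 3 / 2)%R in
  let q := i - s1 m - s2 n m - (gamma - 1) * (m + 1) + gamma * (gamma - 1) / 2 in
  x_mid n m d - d * ((-1) ^ (n + gamma) * (gamma + 2 * q - m - 2) - m * (-1) ^ n).

Definition xseq (n m d i : Z) : Z :=
  if i <=? s1 m then xA n m d i
  else if i <=? s1 m + s2 n m then xB n m d i
  else xC n m d i.

Definition xlist (n m d : Z) (N : nat) : list Z :=
  map (fun k => xseq n m d (Z.of_nat k)) (seq 1 N).

From Stdlib Require Import ZArith Reals List Lia Lra Psatz FunctionalExtensionality Bool.
Open Scope Z_scope.

(** The moves come in rounds.  A round slides one checker into the vacancy and
    then lets checkers of one colour hop, one after the other, over the
    alternating zone [W B W B ...] next to the vacancy; successive rounds run in
    opposite directions.  While blacks remain on the left and whites on the right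
    the zone grows by one pair per round ([m] rounds), then it is carried leftwards
    through the remaining blacks ([n - m] rounds), and finally it shrinks by one
    pair per round ([m] rounds).  The closed formula for [x_i] enumerates exactly
    these sweeps.

    For optimality, call the level of the vacancy the number of blacks minus the
    number of whites to its left, and call the [X]-th black and the [Y]-th white
    a pending pair while the white is still to the right of the black.  Consider
    the potential: pending pairs plus levels in [-m..n] still to be visited,
    namely the current level, the final level [-m], and [X - Y] for every pending
    pair.  A jump over a checker of the other colour settles exactly one pair,
    one with [X - Y] equal to the level of the vacancy, which the jump does not
    change; every other move settles no pair and can only forget the old level.
    So each move lowers the potential by at most one, and it falls from
    [nm + n + m + 1] to [1]. *)

Ltac case_cmp := repeat match goal with
  | |- context [?a =? ?b] => destruct (Z.eqb_spec a b)
  | |- context [?a <=? ?b] => destruct (Z.leb_spec a b)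
  | |- context [?a <? ?b] => destruct (Z.ltb_spec a b)
  | H : context [?a =? ?b] |- _ => destruct (Z.eqb_spec a b)
  | H : context [?a <=? ?b] |- _ => destruct (Z.leb_spec a b)
  | H : context [?a <? ?b] |- _ => destruct (Z.ltb_spec a b)
  end; cbn [andb orb negb] in *; try (exfalso; lia); try reflexivity.

Lemma cell_eq_dec (a b : cell) : {a = b} + {a <> b}.
Proof. decide equality. Defined.

Definition swap (c : config) (i j : Z) : config :=
  fun p => if p =? i then c j else if p =? j then c i else c p.

Lemma swap_comm c i j : swap c i j = swap c j i.
Proof. apply functional_extensionality; intros p. unfold swap. case_cmp; congruence. Qed.

Lemma swap_involutive c i j : swap (swap c i j) i j = c.
Proof. apply functional_extensionality; intros p. unfold swap. case_cmp; congruence. Qed.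

Lemma swap_l c i j : swap c i j i = c j.
Proof. unfold swap. case_cmp. Qed.

Lemma swap_r c i j : i <> j -> swap c i j j = c i.
Proof. intros. unfold swap. case_cmp. Qed.

Lemma swap_other c i j p : p <> i -> p <> j -> swap c i j p = c p.
Proof. intros. unfold swap. case_cmp. Qed.

Lemma legal_run_app L c xs c1 ys c2 :
  legal_run L c xs c1 -> legal_run L c1 ys c2 -> legal_run L c (xs ++ ys) c2.
Proof. induction 1; intros; cbn; [assumption | econstructor; eauto]. Qed.

Lemma legal_move_intro L c v x : 1 <= v <= L -> 1 <= x <= L -> c v = Vac -> c x <> Vac ->
  (Z.abs (x - v) = 1 \/ Z.abs (x - v) = 2 /\ c ((x + v) / 2) <> Vac) ->
  legal_move L c x (swap c v x).
Proof.
  intros Hv Hx Hcv Hcx Hkind. exists v. do 5 (split; auto).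
  apply functional_extensionality. intros p. unfold swap. case_cmp; congruence.
Qed.

Definition single_vacancy (L : Z) (c : config) : Prop :=
  forall p q, 1 <= p <= L -> 1 <= q <= L -> c p = Vac -> c q = Vac -> p = q.

Lemma legal_move_is_swap L c v x c' : single_vacancy L c -> 1 <= v <= L -> c v = Vac ->
  legal_move L c x c' ->
  c' = swap c v x /\ 1 <= x <= L /\ c x <> Vac
  /\ (Z.abs (x - v) = 1 \/ Z.abs (x - v) = 2 /\ c ((x + v) / 2) <> Vac).
Proof.
  intros Hsingle Hv Hcv [v' [Hv' [Hcv' [Hx [Hcx [Hkind ->]]]]]].
  assert (v' = v) as -> by (apply Hsingle; auto).
  split; [|tauto]. apply functional_extensionality. intros p. unfold swap. case_cmp; congruence.
Qed.

Lemma single_vacancy_swap L c v x : single_vacancy L c -> 1 <= v <= L -> 1 <= x <= L ->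
  c v = Vac -> c x <> Vac -> single_vacancy L (swap c v x) /\ swap c v x x = Vac.
Proof.
  intros Hsingle Hv Hx Hcv Hcx. split.
  - intros p q Hp Hq. unfold swap. case_cmp; intros Ep Eq; subst; try congruence;
      try (exfalso; apply Hcx; congruence);
      match goal with H : ?a <> ?b |- _ => exfalso; apply H; apply Hsingle; auto; lia end.
  - unfold swap. case_cmp; congruence.
Qed.

(** * Rounds of hops *)

Ltac solve_parity :=
  rewrite ?Z.even_sub, ?Z.even_add, ?Z.even_mul in *;
  cbn [Z.even Bool.eqb negb andb orb] in *;
  repeat match goal with |- context [Z.even ?x] => is_var x; destruct (Z.even x) end;
  cbn [Bool.eqb negb] in *; try reflexivity; try congruence.

Fixpoint progression (x step : Z) (k : nat) : list Z :=
  match k with O => nil | S k' => x :: progression (x + step) step k' end.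

Definition after_white_hops (c : config) (v k : Z) : config := fun p =>
  if (v <=? p) && (p <? v + 2 * k) then (if Z.even (p - v) then Wt else Bk)
  else if p =? v + 2 * k then Vac else c p.

Lemma legal_run_white_hops L c v k : 1 <= v -> v + 2 * Z.of_nat k <= L -> c v = Vac ->
  (forall i, 0 <= i < Z.of_nat k -> c (v + 2 * i + 1) = Bk /\ c (v + 2 * i + 2) = Wt) ->
  legal_run L c (progression (v + 2) 2 k) (after_white_hops c v (Z.of_nat k)).
Proof.
  revert v c; induction k as [|k IH]; intros v c Hv HvL Hcv Hpat.
  - replace (after_white_hops c v (Z.of_nat 0)) with c; [constructor|].
    apply functional_extensionality; intros p. unfold after_white_hops.
    change (Z.of_nat 0) with 0. rewrite Z.mul_0_r, Z.add_0_r. case_cmp; subst; congruence.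
  - rewrite Nat2Z.inj_succ in *. cbn [progression].
    destruct (Hpat 0) as [Hb Hw]; [lia|]. rewrite Z.mul_0_r, Z.add_0_r in Hb, Hw.
    apply run_cons with (swap c v (v + 2)).
    + apply legal_move_intro; try lia; try congruence. right. split; [lia|].
      rewrite <- (Z.div_unique_exact _ 2 (v + 1)) by lia. congruence.
    + replace (after_white_hops c v (Z.succ (Z.of_nat k)))
        with (after_white_hops (swap c v (v + 2)) (v + 2) (Z.of_nat k)).
      * apply IH; try lia.
        -- unfold swap. case_cmp. assumption.
        -- intros i Hi. destruct (Hpat (i + 1)) as [Hb' Hw']; [lia|].
           unfold swap. case_cmp. split; [rewrite <- Hb' | rewrite <- Hw']; f_equal; lia.
      * apply functional_extensionality; intros p. unfold after_white_hops, swap.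
        case_cmp; subst; try congruence;
          try (replace p with (v + 1) by lia; rewrite Hb); solve_parity.
Qed.

Definition after_black_hops (c : config) (v k : Z) : config := fun p =>
  if (v - 2 * k <? p) && (p <=? v) then (if Z.even (v - p) then Bk else Wt)
  else if p =? v - 2 * k then Vac else c p.

Lemma legal_run_black_hops L c v k : v <= L -> 1 <= v - 2 * Z.of_nat k -> c v = Vac ->
  (forall i, 0 <= i < Z.of_nat k -> c (v - 2 * i - 1) = Wt /\ c (v - 2 * i - 2) = Bk) ->
  legal_run L c (progression (v - 2) (-2) k) (after_black_hops c v (Z.of_nat k)).
Proof.
  revert v c; induction k as [|k IH]; intros v c HvL Hv Hcv Hpat.
  - replace (after_black_hops c v (Z.of_nat 0)) with c; [constructor|].
    apply functional_extensionality; intros p. unfold after_black_hops.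
    change (Z.of_nat 0) with 0. rewrite Z.mul_0_r, Z.sub_0_r. case_cmp; subst; congruence.
  - rewrite Nat2Z.inj_succ in *. cbn [progression].
    destruct (Hpat 0) as [Hw Hb]; [lia|]. rewrite Z.mul_0_r, Z.sub_0_r in Hb, Hw.
    apply run_cons with (swap c v (v - 2)).
    + apply legal_move_intro; try lia; try congruence. right. split; [lia|].
      rewrite <- (Z.div_unique_exact _ 2 (v - 1)) by lia. congruence.
    + replace (v - 2 + -2) with (v - 2 - 2) by lia.
      replace (after_black_hops c v (Z.succ (Z.of_nat k)))
        with (after_black_hops (swap c v (v - 2)) (v - 2) (Z.of_nat k)).
      * apply IH; try lia.
        -- unfold swap. case_cmp. assumption.
        -- intros i Hi. destruct (Hpat (i + 1)) as [Hw' Hb']; [lia|].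
           unfold swap. case_cmp. split; [rewrite <- Hw' | rewrite <- Hb']; f_equal; lia.
      * apply functional_extensionality; intros p. unfold after_black_hops, swap.
        case_cmp; subst; try congruence;
          try (replace p with (v - 1) by lia; rewrite Hw); solve_parity.
Qed.

Definition sweep (c0 dir : Z) (k : nat) : list Z :=
  progression (c0 - dir * (Z.of_nat k - 1)) (2 * dir) k.

Lemma sweep_up c0 k :
  sweep c0 1 (S k) = (c0 - Z.of_nat k) :: progression (c0 - Z.of_nat k + 2) 2 k.
Proof. unfold sweep. rewrite Nat2Z.inj_succ. cbn [progression].
  f_equal; [lia | f_equal; lia].
Qed.

Lemma sweep_down c0 k :
  sweep c0 (-1) (S k) = (c0 + Z.of_nat k) :: progression (c0 + Z.of_nat k - 2) (-2) k.
Proof. unfold sweep. rewrite Nat2Z.inj_succ. cbn [progression].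
  f_equal; [lia | f_equal; lia].
Qed.

(** [P^l], then the zone [O (W B)^a] if [dir = 1] or [(W B)^a O] otherwise, then
    [Q] up to position [L].  Outside the board it agrees with [init_config], so
    that [init_config] is an instance and runs glue by equality of configurations. *)
Definition zone_config (L : Z) (P Q : cell) (l a dir : Z) : config := fun p =>
  if p <=? 0 then Bk else if L <? p then Wt
  else if p <=? l then P
  else if l + 2 * a + 1 <? p then Q
  else if dir =? 1 then (if p =? l + 1 then Vac else if Z.even (p - l) then Wt else Bk)
  else (if p =? l + 2 * a + 1 then Vac else if Z.even (p - l) then Bk else Wt).

Ltac pin p := first [
   match goal with H : p <= ?e |- _ => assert (p = e) by lia end
 | match goal with H : ?e <= p |- _ => assert (p = e) by lia end
 | match goal with H : ?e < p |- _ => assert (p = e + 1) by lia end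
 | match goal with H : p < ?e |- _ => assert (p = e - 1) by lia end
 | idtac ].

Ltac solve_config :=
  let p := fresh "p" in
  apply functional_extensionality; intro p;
  unfold zone_config, after_white_hops, after_black_hops, swap;
  case_cmp; subst; try (pin p; subst p); solve_parity.

Lemma legal_run_round_expand L l k dir : dir = 1 \/ dir = -1 ->
  1 <= l -> l + 2 * Z.of_nat k + 2 <= L ->
  legal_run L (zone_config L Bk Wt l (Z.of_nat k) dir)
    (sweep (l + Z.of_nat k + 1) dir (S (S k)))
    (zone_config L Bk Wt (l - 1) (Z.of_nat k + 1) (- dir)).
Proof.
  intros [-> | ->] Hl HL.
  - change (- (1)) with (-1). rewrite sweep_up.
    replace (l + Z.of_nat k + 1 - Z.of_nat (S k)) with l by lia.
    eapply run_cons.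
    + apply legal_move_intro with (v := l + 1); try lia; unfold zone_config; case_cmp; congruence.
    + replace (zone_config L Bk Wt (l - 1) (Z.of_nat k + 1) (-1))
        with (after_white_hops (swap (zone_config L Bk Wt l (Z.of_nat k) 1) (l + 1) l)
                l (Z.of_nat (S k))).
      * apply legal_run_white_hops; rewrite ?Nat2Z.inj_succ; try lia.
        -- unfold zone_config, swap; case_cmp.
        -- intros i Hi. unfold zone_config, swap. split; case_cmp; solve_parity.
      * rewrite Nat2Z.inj_succ. solve_config.
  - change (- (-1)) with 1. rewrite sweep_down.
    replace (l + Z.of_nat k + 1 + Z.of_nat (S k)) with (l + 2 * Z.of_nat k + 2) by lia.
    eapply run_cons.
    + apply legal_move_intro with (v := l + 2 * Z.of_nat k + 1); try lia;
        unfold zone_config; case_cmp; congruence.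
    + replace (zone_config L Bk Wt (l - 1) (Z.of_nat k + 1) 1)
        with (after_black_hops
                (swap (zone_config L Bk Wt l (Z.of_nat k) (-1)) (l + 2 * Z.of_nat k + 1)
                   (l + 2 * Z.of_nat k + 2))
                (l + 2 * Z.of_nat k + 2) (Z.of_nat (S k))).
      * apply legal_run_black_hops; rewrite ?Nat2Z.inj_succ; try lia.
        -- unfold zone_config, swap; case_cmp.
        -- intros i Hi. unfold zone_config, swap. split; case_cmp; solve_parity.
      * rewrite Nat2Z.inj_succ. solve_config.
Qed.

Lemma legal_run_round_shift L l k dir : dir = 1 \/ dir = -1 ->
  1 <= l -> l + 2 * Z.of_nat k + 1 <= L ->
  legal_run L (zone_config L Bk Bk l (Z.of_nat k) dir)
    (sweep (l + Z.of_nat k) dir (S k))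
    (zone_config L Bk Bk (l - 1) (Z.of_nat k) (- dir)).
Proof.
  intros [-> | ->] Hl HL.
  - change (- (1)) with (-1). rewrite sweep_up.
    replace (l + Z.of_nat k - Z.of_nat k) with l by lia.
    eapply run_cons.
    + apply legal_move_intro with (v := l + 1); try lia; unfold zone_config; case_cmp; congruence.
    + replace (zone_config L Bk Bk (l - 1) (Z.of_nat k) (-1))
        with (after_white_hops (swap (zone_config L Bk Bk l (Z.of_nat k) 1) (l + 1) l)
                l (Z.of_nat k)).
      * apply legal_run_white_hops; try lia.
        -- unfold zone_config, swap; case_cmp.
        -- intros i Hi. unfold zone_config, swap. split; case_cmp; solve_parity.
      * solve_config.
  - change (- (-1)) with 1. rewrite sweep_down.
    replace (l + Z.of_nat k + Z.of_nat k) with (l + 2 * Z.of_nat k) by lia.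
    eapply run_cons.
    + apply legal_move_intro with (v := l + 2 * Z.of_nat k + 1); try lia;
        unfold zone_config; case_cmp; solve_parity.
    + replace (zone_config L Bk Bk (l - 1) (Z.of_nat k) 1)
        with (after_black_hops
                (swap (zone_config L Bk Bk l (Z.of_nat k) (-1)) (l + 2 * Z.of_nat k + 1)
                   (l + 2 * Z.of_nat k))
                (l + 2 * Z.of_nat k) (Z.of_nat k)).
      * apply legal_run_black_hops; try lia.
        -- unfold zone_config, swap; case_cmp.
        -- intros i Hi. unfold zone_config, swap. split; case_cmp; solve_parity.
      * solve_config.
Qed.

Lemma legal_run_round_shrink L l k dir : dir = 1 \/ dir = -1 ->
  0 <= l -> l + 2 * Z.of_nat k + 3 <= L ->
  legal_run L (zone_config L Wt Bk l (Z.of_nat k + 1) dir)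
    (sweep (l + Z.of_nat k + 2) dir (S k))
    (zone_config L Wt Bk (l + 1) (Z.of_nat k) (- dir)).
Proof.
  intros [-> | ->] Hl HL.
  - change (- (1)) with (-1). rewrite sweep_up.
    replace (l + Z.of_nat k + 2 - Z.of_nat k) with (l + 2) by lia.
    eapply run_cons.
    + apply legal_move_intro with (v := l + 1); try lia; unfold zone_config; case_cmp; solve_parity.
    + replace (zone_config L Wt Bk (l + 1) (Z.of_nat k) (-1))
        with (after_white_hops (swap (zone_config L Wt Bk l (Z.of_nat k + 1) 1) (l + 1) (l + 2))
                (l + 2) (Z.of_nat k)).
      * apply legal_run_white_hops; try lia.
        -- unfold zone_config, swap; case_cmp.
        -- intros i Hi. unfold zone_config, swap. split; case_cmp; solve_parity.
      * solve_config.
  - change (- (-1)) with 1. rewrite sweep_down.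
    replace (l + Z.of_nat k + 2 + Z.of_nat k) with (l + 2 * Z.of_nat k + 2) by lia.
    eapply run_cons.
    + apply legal_move_intro with (v := l + 2 * Z.of_nat k + 3); try lia;
        unfold zone_config; case_cmp; solve_parity.
    + replace (zone_config L Wt Bk (l + 1) (Z.of_nat k) 1)
        with (after_black_hops
                (swap (zone_config L Wt Bk l (Z.of_nat k + 1) (-1)) (l + 2 * Z.of_nat k + 3)
                   (l + 2 * Z.of_nat k + 2))
                (l + 2 * Z.of_nat k + 2) (Z.of_nat k)).
      * apply legal_run_black_hops; try lia.
        -- unfold zone_config, swap; case_cmp.
        -- intros i Hi. unfold zone_config, swap. split; case_cmp; solve_parity.
      * solve_config.
Qed.

(** * Closed forms of the move sequence *)

Lemma Int_part_eq (r : R) (z : Z) : (IZR z <= r < IZR z + 1)%R -> Int_part r = z.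
Proof. intros Hr. symmetry. apply Int_part_spec. lra. Qed.

Lemma le_sqrt_of_sq (a x : R) : (0 <= a)%R -> (a * a <= x)%R -> (a <= sqrt x)%R.
Proof. intros Ha Hx. rewrite <- (sqrt_square a) by exact Ha. now apply sqrt_le_1_alt. Qed.

Lemma sqrt_lt_of_sq (a x : R) : (0 <= a)%R -> (0 <= x < a * a)%R -> (sqrt x < a)%R.
Proof. intros Ha Hx. rewrite <- (sqrt_square a) by exact Ha. now apply sqrt_lt_1_alt. Qed.

Lemma lt_sqrt_of_sq (a x : R) : (0 <= a)%R -> (a * a < x)%R -> (a < sqrt x)%R.
Proof. intros Ha Hx. rewrite <- (sqrt_square a) by exact Ha. apply sqrt_lt_1_alt. nra. Qed.

Lemma sqrt_le_of_sq (a x : R) : (0 <= a)%R -> (x <= a * a)%R -> (sqrt x <= a)%R.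
Proof. intros Ha Hx. rewrite <- (sqrt_square a) by exact Ha. now apply sqrt_le_1_alt. Qed.

Ltac push_IZR :=
  repeat first [rewrite plus_IZR in * | rewrite minus_IZR in * | rewrite mult_IZR in *].

(** Here [(2A + 1)^2 <= 8 i + 1 < (2A + 3)^2]. *)
Lemma alpha_eq A t i : 1 <= A -> 0 <= t <= A -> 2 * i = A * (A + 1) + 2 * t ->
  rfloor ((sqrt (IZR (8 * i + 1)) - 1) / 2)%R = A.
Proof.
  intros HA Ht Hi. unfold rfloor. apply Int_part_eq.
  assert (Hlo : (IZR (2 * A + 1) <= sqrt (IZR (8 * i + 1)))%R).
  { apply le_sqrt_of_sq; [apply IZR_le; lia|]. rewrite <- mult_IZR. apply IZR_le. nia. }
  assert (Hhi : (sqrt (IZR (8 * i + 1)) < IZR (2 * A + 3))%R).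
  { apply sqrt_lt_of_sq; [apply IZR_le; lia|]. rewrite <- mult_IZR.
    split; [apply IZR_le | apply IZR_lt]; nia. }
  push_IZR. lra.
Qed.

(** With [g = m - G] the radicand is [(4 g^2 + 12 g + 17 - 8 q) / 4], which lies
    strictly above [((2 g + 1) / 2)^2] and at most at [((2 g + 3) / 2)^2]. *)
Lemma gamma_eq m G q j : 1 <= G <= m -> 1 <= q <= m + 1 - G ->
  2 * j = 2 * (G - 1) * (m + 1) - G * (G - 1) + 2 * q ->
  rfloor (IZR m - sqrt (IZR (m * (m + 1)) - 2 * IZR j + 9 / 4) + 3 / 2)%R = G.
Proof.
  intros HG Hq Hj. unfold rfloor. apply Int_part_eq.
  set (g := m - G).
  assert (Hrad : (IZR (m * (m + 1)) - 2 * IZR j + 9 / 4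
                  = IZR (4 * g * g + 12 * g + 17 - 8 * q) / 4)%R).
  { assert (E : 4 * (m * (m + 1)) - 8 * j + 9 = 4 * g * g + 12 * g + 17 - 8 * q)
      by (unfold g; nia).
    apply (f_equal IZR) in E. push_IZR. lra. }
  assert (Hg : (0 <= IZR g)%R) by (apply IZR_le; unfold g; lia).
  assert (Hbounds : (IZR ((2 * g + 1) * (2 * g + 1)) < IZR (4 * g * g + 12 * g + 17 - 8 * q)
                     <= IZR ((2 * g + 3) * (2 * g + 3)))%R)
    by (split; [apply IZR_lt | apply IZR_le]; unfold g; nia).
  rewrite Hrad. set (N := IZR (4 * g * g + 12 * g + 17 - 8 * q)) in *.
  push_IZR.
  assert (Hlo : (IZR g + 1 / 2 < sqrt (N / 4))%R) by (apply lt_sqrt_of_sq; nra).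
  assert (Hhi : (sqrt (N / 4) <= IZR g + 3 / 2)%R) by (apply sqrt_le_of_sq; nra).
  unfold g in *. rewrite minus_IZR in *. lra.
Qed.

Lemma minus_one_pow k : 0 <= k -> (-1) ^ k = if Z.even k then 1 else -1.
Proof.
  intros Hk. pattern k; apply natlike_ind; [reflexivity| |lia]. clear k Hk; intros k Hk IH.
  rewrite Z.pow_succ_r, IH, Z.even_succ, <- Z.negb_even by lia.
  destruct (Z.even k); reflexivity.
Qed.

Ltac expand_signs :=
  rewrite ?minus_one_pow in * by lia; rewrite ?Z.even_add, ?Z.even_sub in *;
  cbn [Z.even] in *;
  repeat match goal with |- context [Z.even ?x] => is_var x; destruct (Z.even x) end;
  cbn [Bool.eqb negb] in *.

Lemma div2_consecutive k : 2 * (k * (k + 1) / 2) = k * (k + 1).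
Proof.
  destruct (Z.Even_or_Odd k) as [[h ->] | [h ->]].
  - rewrite <- (Z.div_unique_exact _ 2 (h * (2 * h + 1))) by (lia || ring). ring.
  - rewrite <- (Z.div_unique_exact _ 2 ((2 * h + 1) * (h + 1))) by (lia || ring). ring.
Qed.

Lemma two_s1 m : 2 * s1 m = m * (m + 3).
Proof.
  unfold s1. replace (m * (m + 3)) with (m * (m + 1) + m * 2) by ring.
  rewrite Z.div_add by lia. pose proof (div2_consecutive m). lia.
Qed.

Lemma xA_eq n m d A t i : 1 <= A -> 0 <= t <= A -> 2 * i = A * (A + 1) + 2 * t ->
  xA n m d i = n + 1 - (-1) ^ A * d * (2 * t - A).
Proof.
  intros HA Ht Hi. unfold xA. rewrite (alpha_eq A t i) by assumption. f_equal. f_equal. nia.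
Qed.

Lemma xA_s1 n m d : 1 <= m -> xA n m d (s1 m) = n + 1 - (-1) ^ m * d * m.
Proof.
  intros Hm. rewrite (xA_eq n m d m m) by (pose proof (two_s1 m); lia). f_equal. f_equal. lia.
Qed.

Lemma xB_eq n m d B p i : 0 <= m -> 1 <= B -> 1 <= p <= m + 1 ->
  i = s1 m + (B - 1) * (m + 1) + p ->
  xB n m d i = xA n m d (s1 m) - B - (-1) ^ (m + B) * d * (2 * p - 2 - m * (1 + (-1) ^ B)).
Proof.
  intros Hm HB Hp ->. unfold xB.
  rewrite <- (Z.div_unique _ (m + 1) B (p - 1)); [| lia | ring].
  replace (s1 m + (B - 1) * (m + 1) + p - s1 m - (B - 1) * (m + 1)) with p by ring.
  reflexivity.
Qed.

Lemma x_mid_eq n m d : 1 <= m <= n -> (d = 1 \/ d = -1) -> x_mid n m d = m + 1 - (-1) ^ n * d * m.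
Proof.
  intros Hnm Hd. unfold x_mid, s2. case_cmp.
  - assert (n = m) as -> by nia. rewrite Z.sub_diag, Z.mul_0_l, Z.add_0_r, xA_s1 by lia. lia.
  - rewrite (xB_eq n m d (n - m) (m + 1)), xA_s1 by (nia || ring).
    replace (m + (n - m)) with n by ring. destruct Hd as [-> | ->]; expand_signs; lia.
Qed.

Lemma xC_eq n m d G q i : 1 <= G <= m -> 1 <= q <= m + 1 - G ->
  2 * (i - s1 m - s2 n m) = 2 * (G - 1) * (m + 1) - G * (G - 1) + 2 * q ->
  xC n m d i = x_mid n m d - d * ((-1) ^ (n + G) * (G + 2 * q - m - 2) - m * (-1) ^ n).
Proof.
  intros HG Hq Hi. unfold xC. rewrite (gamma_eq m G q) by assumption.
  assert (Htri : 2 * (G * (G - 1) / 2) = G * (G - 1)).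
  { pose proof (div2_consecutive (G - 1)) as H. replace (G - 1 + 1) with G in H by ring.
    now rewrite (Z.mul_comm (G - 1) G) in H. }
  replace (i - s1 m - s2 n m - (G - 1) * (m + 1) + G * (G - 1) / 2) with q by lia.
  reflexivity.
Qed.

Lemma xseq_expand n m d a t i : 1 <= m -> 0 <= a < m -> 0 <= t <= a + 1 ->
  2 * i = a * (a + 3) + 2 * t + 2 ->
  xseq n m d i = n + 1 - (-1) ^ a * d * (a + 1) + 2 * ((-1) ^ a * d) * t.
Proof.
  intros Hm Ha Ht Hi. pose proof (two_s1 m).
  unfold xseq. replace (i <=? s1 m) with true by (symmetry; apply Z.leb_le; nia).
  rewrite (xA_eq n m d (a + 1) t) by lia. rewrite Z.pow_add_r by lia. ring.
Qed.

Lemma xseq_shift n m d b t i : 1 <= m <= n -> 0 <= b < n - m -> 0 <= t <= m ->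
  i = s1 m + b * (m + 1) + t + 1 -> (d = 1 \/ d = -1) ->
  xseq n m d i = n - b - (-1) ^ (m + b) * d * m + 2 * ((-1) ^ (m + b) * d) * t.
Proof.
  intros Hnm Hb Ht Hi Hd. unfold xseq.
  replace (i <=? s1 m) with false by (symmetry; apply Z.leb_gt; lia).
  replace (i <=? s1 m + s2 n m) with true by (symmetry; apply Z.leb_le; unfold s2; nia).
  rewrite (xB_eq n m d (b + 1) (t + 1)), xA_s1 by (lia || ring).
  destruct Hd as [-> | ->]; expand_signs; lia.
Qed.

Lemma xseq_shrink n m d g t i : 0 <= g < m -> m <= n -> 0 <= t < m - g ->
  2 * (i - s1 m - s2 n m) = 2 * g * (m + 1) - g * (g + 1) + 2 * t + 2 -> (d = 1 \/ d = -1) ->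
  xseq n m d i = m + 1 - (-1) ^ (n + g) * d * (m - g - 1) + 2 * ((-1) ^ (n + g) * d) * t.
Proof.
  intros Hg Hmn Ht Hi Hd. assert (0 <= s2 n m) by (unfold s2; nia).
  unfold xseq. replace (i <=? s1 m) with false by (symmetry; apply Z.leb_gt; nia).
  replace (i <=? s1 m + s2 n m) with false by (symmetry; apply Z.leb_gt; nia).
  rewrite (xC_eq n m d (g + 1) (t + 1)), x_mid_eq by (lia || nia).
  destruct Hd as [-> | ->]; expand_signs; lia.
Qed.

(** * The three phases *)

Definition xslice (n m d : Z) (s k : nat) : list Z :=
  map (fun j => xseq n m d (Z.of_nat j)) (seq s k).

Lemma xslice_app n m d s k1 k2 :
  xslice n m d s (k1 + k2) = xslice n m d s k1 ++ xslice n m d (s + k1) k2.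
Proof. unfold xslice. now rewrite seq_app, map_app. Qed.

Lemma xslice_sweep n m d s c0 dir k :
  (forall t, (t < k)%nat ->
     xseq n m d (Z.of_nat (s + t)) = c0 - dir * (Z.of_nat k - 1) + 2 * dir * Z.of_nat t) ->
  xslice n m d s k = sweep c0 dir k.
Proof.
  unfold xslice, sweep. generalize (c0 - dir * (Z.of_nat k - 1)) as x0. revert s.
  induction k as [|k IH]; intros s x0 Hx; [reflexivity|]. cbn [seq map progression].
  f_equal.
  - specialize (Hx O). rewrite Nat.add_0_r in Hx. rewrite Hx by lia. cbn. lia.
  - apply IH. intros t Ht. replace (S s + t)%nat with (s + S t)%nat by lia.
    rewrite Hx by lia. rewrite Nat2Z.inj_succ. lia.
Qed.

Lemma sign_cases k d : 0 <= k -> (d = 1 \/ d = -1) -> (-1) ^ k * d = 1 \/ (-1) ^ k * d = -1.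
Proof. intros Hk Hd. rewrite minus_one_pow by lia. destruct (Z.even k); lia. Qed.

Lemma sign_succ k d : 0 <= k -> (-1) ^ (k + 1) * d = - ((-1) ^ k * d).
Proof. intros Hk. rewrite Z.pow_add_r by lia. ring. Qed.

Fixpoint expand_moves (a : nat) : nat :=
  match a with O => O | S a' => expand_moves a' + S (S a') end.

Lemma two_expand_moves a : 2 * Z.of_nat (expand_moves a) = Z.of_nat a * (Z.of_nat a + 3).
Proof. induction a as [|a IH]; cbn [expand_moves]; [reflexivity|]. lia. Qed.

Lemma legal_run_expand_phase n m d a : 1 <= m <= n -> (d = 1 \/ d = -1) -> Z.of_nat a <= m ->
  legal_run (n + m + 1) (init_config n m) (xslice n m d 1 (expand_moves a))
    (zone_config (n + m + 1) Bk Wt (n - Z.of_nat a) (Z.of_nat a) ((-1) ^ Z.of_nat a * d)).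
Proof.
  intros Hnm Hd. induction a as [|a IH]; intros Ha.
  - replace (zone_config _ _ _ _ _ _) with (init_config n m); [constructor|].
    apply functional_extensionality; intros p. unfold zone_config, init_config. case_cmp.
  - cbn [expand_moves]. rewrite xslice_app. eapply legal_run_app; [apply IH; lia|].
    rewrite Nat2Z.inj_succ in *. rewrite <- Z.add_1_r in *.
    replace (n - (Z.of_nat a + 1)) with (n - Z.of_nat a - 1) by lia.
    rewrite sign_succ by lia.
    rewrite (xslice_sweep n m d _ (n - Z.of_nat a + Z.of_nat a + 1) ((-1) ^ Z.of_nat a * d)).
    + apply legal_run_round_expand; [apply sign_cases | | ]; lia.
    + intros t Ht. pose proof (two_expand_moves a).
      rewrite (xseq_expand n m d (Z.of_nat a) (Z.of_nat t)) by lia.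
      rewrite !Nat2Z.inj_succ. lia.
Qed.

Lemma legal_run_shift_phase n m d mn s0 b : m = Z.of_nat mn -> 1 <= m <= n ->
  (d = 1 \/ d = -1) -> Z.of_nat s0 = s1 m + 1 -> Z.of_nat b <= n - m ->
  legal_run (n + m + 1) (zone_config (n + m + 1) Bk Bk (n - m) m ((-1) ^ m * d))
    (xslice n m d s0 (b * S mn))
    (zone_config (n + m + 1) Bk Bk (n - m - Z.of_nat b) m ((-1) ^ (m + Z.of_nat b) * d)).
Proof.
  intros Hm Hnm Hd Hs0. induction b as [|b IH]; intros Hb.
  - rewrite Z.sub_0_r, Z.add_0_r. constructor.
  - rewrite Nat.mul_succ_l, xslice_app. eapply legal_run_app; [apply IH; lia|].
    rewrite Nat2Z.inj_succ in *. rewrite <- Z.add_1_r in *.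
    replace (n - m - (Z.of_nat b + 1)) with (n - m - Z.of_nat b - 1) by lia.
    rewrite Z.add_assoc, sign_succ by lia.
    rewrite (xslice_sweep n m d _ (n - m - Z.of_nat b + m) ((-1) ^ (m + Z.of_nat b) * d)).
    + rewrite Hm. apply legal_run_round_shift; [apply sign_cases | | ]; lia.
    + intros t Ht.
      rewrite (xseq_shift n m d (Z.of_nat b) (Z.of_nat t))
        by (rewrite ?Nat2Z.inj_add, ?Nat2Z.inj_mul; lia).
      rewrite Nat2Z.inj_succ. lia.
Qed.

Fixpoint shrink_moves (mn g : nat) : nat :=
  match g with O => O | S g' => shrink_moves mn g' + (mn - g') end.

Lemma two_shrink_moves mn g : (g <= mn)%nat ->
  2 * Z.of_nat (shrink_moves mn g)
  = 2 * Z.of_nat g * (Z.of_nat mn + 1) - Z.of_nat g * (Z.of_nat g + 1).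
Proof. induction g as [|g IH]; intros Hg; cbn [shrink_moves]; [reflexivity|]. lia. Qed.

Lemma legal_run_shrink_phase n m d mn s0 g : m = Z.of_nat mn -> 1 <= m <= n ->
  (d = 1 \/ d = -1) -> Z.of_nat s0 = s1 m + s2 n m + 1 -> (g <= mn)%nat ->
  legal_run (n + m + 1) (zone_config (n + m + 1) Wt Bk 0 m ((-1) ^ n * d))
    (xslice n m d s0 (shrink_moves mn g))
    (zone_config (n + m + 1) Wt Bk (Z.of_nat g) (m - Z.of_nat g) ((-1) ^ (n + Z.of_nat g) * d)).
Proof.
  intros Hm Hnm Hd Hs0. induction g as [|g IH]; intros Hg.
  - rewrite Z.sub_0_r, Z.add_0_r. constructor.
  - cbn [shrink_moves]. rewrite xslice_app. eapply legal_run_app; [apply IH; lia|].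
    replace (mn - g)%nat with (S (mn - g - 1)) by lia.
    rewrite Nat2Z.inj_succ in *. rewrite <- Z.add_1_r in *.
    replace (m - Z.of_nat g) with (Z.of_nat (mn - g - 1) + 1) by lia.
    replace (m - (Z.of_nat g + 1)) with (Z.of_nat (mn - g - 1)) by lia.
    rewrite Z.add_assoc, sign_succ by lia.
    rewrite (xslice_sweep n m d _ (Z.of_nat g + Z.of_nat (mn - g - 1) + 2)
               ((-1) ^ (n + Z.of_nat g) * d)).
    + apply legal_run_round_shrink; [apply sign_cases | | ]; lia.
    + intros t Ht. pose proof (two_shrink_moves mn g).
      rewrite (xseq_shrink n m d (Z.of_nat g) (Z.of_nat t)) by (rewrite ?Nat2Z.inj_add; lia).
      assert (E : Z.of_nat (mn - g - 1) = m - Z.of_nat g - 1) by lia.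
      rewrite Nat2Z.inj_succ, E. ring.
Qed.

Lemma legal_run_xlist n m d : 1 <= m <= n -> (d = 1 \/ d = -1) ->
  exists c, legal_run (n + m + 1) (init_config n m) (xlist n m d (Z.to_nat (n * m + n + m))) c
            /\ same_on_board (n + m + 1) c (final_config n m).
Proof.
  intros Hnm Hd.
  destruct (Z_of_nat_complete m) as [mn Hm]; [lia|].
  destruct (Z_of_nat_complete (n - m)) as [nb Hnb]; [lia|].
  pose proof (two_s1 m). pose proof (two_expand_moves mn).
  pose proof (two_shrink_moves mn mn (le_n mn)).
  set (L := n + m + 1).
  assert (Hlen : Z.to_nat (n * m + n + m)
                 = (expand_moves mn + nb * S mn + shrink_moves mn mn)%nat).
  { apply Nat2Z.inj. rewrite Z2Nat.id by nia.
    rewrite !Nat2Z.inj_add, Nat2Z.inj_mul, Nat2Z.inj_succ, <- Hm, <- Hnb in *. nia. }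
  assert (Hexpand : legal_run L (init_config n m) (xslice n m d 1 (expand_moves mn))
                      (zone_config L Bk Bk (n - m) m ((-1) ^ m * d))).
  { replace (zone_config L Bk Bk (n - m) m ((-1) ^ m * d)) with
      (zone_config L Bk Wt (n - Z.of_nat mn) (Z.of_nat mn) ((-1) ^ Z.of_nat mn * d)).
    - apply legal_run_expand_phase; lia.
    - rewrite <- Hm. apply functional_extensionality; intros p. unfold zone_config. case_cmp. }
  assert (Hshift : legal_run L (zone_config L Bk Bk (n - m) m ((-1) ^ m * d))
                     (xslice n m d (1 + expand_moves mn) (nb * S mn))
                     (zone_config L Wt Bk 0 m ((-1) ^ n * d))).
  { replace (zone_config L Wt Bk 0 m ((-1) ^ n * d)) with
      (zone_config L Bk Bk (n - m - Z.of_nat nb) m ((-1) ^ (m + Z.of_nat nb) * d)).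
    - apply (legal_run_shift_phase n m d mn); lia.
    - rewrite <- Hnb, Z.sub_diag. replace (m + (n - m)) with n by ring.
      apply functional_extensionality; intros p. unfold zone_config. case_cmp. }
  assert (Hshrink : legal_run L (zone_config L Wt Bk 0 m ((-1) ^ n * d))
                      (xslice n m d (1 + expand_moves mn + nb * S mn) (shrink_moves mn mn))
                      (zone_config L Wt Bk m 0 ((-1) ^ (n + m) * d))).
  { replace (zone_config L Wt Bk m 0 ((-1) ^ (n + m) * d)) with
      (zone_config L Wt Bk (Z.of_nat mn) (m - Z.of_nat mn) ((-1) ^ (n + Z.of_nat mn) * d))
      by (rewrite <- Hm, Z.sub_diag; reflexivity).
    apply (legal_run_shrink_phase n m d mn); try lia.
    unfold s2. rewrite !Nat2Z.inj_add, Nat2Z.inj_mul, Nat2Z.inj_succ. lia. }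
  exists (zone_config L Wt Bk m 0 ((-1) ^ (n + m) * d)). split.
  - change (xlist n m d) with (xslice n m d 1).
    rewrite Hlen, !xslice_app, <- app_assoc. eauto using legal_run_app.
  - intros p Hp. unfold zone_config, final_config. case_cmp.
Qed.

Lemma xseq_first n m d : 1 <= m -> xseq n m d 1 = n + 1 - d.
Proof. intros Hm. rewrite (xseq_expand n m d 0 0) by lia. change ((-1) ^ 0) with 1. ring. Qed.

Fixpoint zrange (a : Z) (k : nat) : list Z :=
  match k with O => nil | S k' => a :: zrange (a + 1) k' end.

Lemma in_zrange a k p : In p (zrange a k) <-> a <= p < a + Z.of_nat k.
Proof.
  revert a; induction k as [|k IH]; intros a; cbn [zrange In].
  - lia.
  - rewrite IH. lia.
Qed.

Lemma NoDup_zrange a k : NoDup (zrange a k).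
Proof.
  revert a; induction k as [|k IH]; intros a; constructor; auto.
  rewrite in_zrange. lia.
Qed.

Lemma NoDup_list_prod {A B : Type} (l : list A) (l' : list B) :
  NoDup l -> NoDup l' -> NoDup (list_prod l l').
Proof.
  intros Hl Hl'. induction Hl as [|a l Ha Hl IH]; cbn [list_prod]; [constructor|].
  apply NoDup_app; auto.
  - apply NoDup_map_NoDup_ForallPairs; auto. intros y y' _ _ E. congruence.
  - intros [x y] Hxy Hin. apply in_map_iff in Hxy as [y' [E _]]. injection E as <- <-.
    apply in_prod_iff in Hin as [Hin _]. contradiction.
Qed.

Lemma length_filter_mono {A : Type} (f g : A -> bool) (l : list A) :
  (forall a, In a l -> f a = true -> g a = true) ->
  (length (filter f l) <= length (filter g l))%nat.
Proof.
  induction l as [|a l IH]; intros H; cbn [filter]; [lia|].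
  specialize (H a (or_introl eq_refl)) as Ha.
  assert (IH' := IH (fun b Hb => H b (or_intror Hb))).
  destruct (f a), (g a); cbn [length]; lia || discriminate (Ha eq_refl).
Qed.

Lemma length_filter_mono_but_one {A : Type} (f g : A -> bool) (u : A) (l : list A) :
  NoDup l -> (forall a, In a l -> f a = true -> g a = true \/ a = u) ->
  (length (filter f l) <= S (length (filter g l)))%nat.
Proof.
  intros Hl. induction Hl as [|a l Ha Hl IH]; intros H; cbn [filter]; [lia|].
  assert (Hrest : forall b, In b l -> f b = true -> g b = true \/ b = u)
    by (intros b Hb; apply H; right; exact Hb).
  specialize (IH Hrest). destruct (f a) eqn:Hfa.
  - destruct (H a (or_introl eq_refl) Hfa) as [Hga| <-].
    + rewrite Hga. cbn [length]. lia.
    + assert (Hle : (length (filter f l) <= length (filter g l))%nat).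
      { apply length_filter_mono. intros b Hb Hfb.
        destruct (Hrest b Hb Hfb) as [Hg| ->]; [exact Hg|contradiction]. }
      destruct (g a); cbn [length]; lia.
  - destruct (g a); cbn [length]; lia.
Qed.

Lemma length_zrange a k : length (zrange a k) = k.
Proof. revert a; induction k; intros a; cbn; auto. Qed.

(** * Prefix counts and inversions *)

Definition indicator (k x : cell) : Z :=
  match k, x with Bk, Bk | Wt, Wt | Vac, Vac => 1 | _, _ => 0 end.

Fixpoint count_upto_nat (k : cell) (c : config) (j : nat) : Z :=
  match j with
  | O => 0
  | S j' => count_upto_nat k c j' + indicator k (c (Z.of_nat (S j')))
  end.

Definition count_upto (k : cell) (c : config) (p : Z) : Z := count_upto_nat k c (Z.to_nat p).

Lemma count_upto_nonpos k c p : p <= 0 -> count_upto k c p = 0.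
Proof. intros Hp. unfold count_upto. replace (Z.to_nat p) with O by lia. reflexivity. Qed.

Lemma count_upto_succ k c p :
  1 <= p -> count_upto k c p = count_upto k c (p - 1) + indicator k (c p).
Proof.
  intros Hp. unfold count_upto. replace (Z.to_nat p) with (S (Z.to_nat (p - 1))) by lia.
  cbn [count_upto_nat]. do 3 f_equal. lia.
Qed.

Lemma Z_nonpos_succ_ind (P : Z -> Prop) :
  (forall p, p <= 0 -> P p) -> (forall p, 1 <= p -> P (p - 1) -> P p) -> forall p, P p.
Proof.
  intros H0 HS p. destruct (Z.le_gt_cases p 0) as [Hp|Hp]; [auto|].
  replace p with (Z.of_nat (Z.to_nat p)) by lia.
  induction (Z.to_nat p) as [|j IH]; [apply H0; lia|].
  apply HS; [lia|]. replace (Z.of_nat (S j) - 1) with (Z.of_nat j) by lia. exact IH.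
Qed.

Lemma count_upto_ext k c c' p :
  (forall q, 1 <= q <= p -> c q = c' q) -> count_upto k c p = count_upto k c' p.
Proof.
  induction p as [p Hp|p Hp IH] using Z_nonpos_succ_ind.
  - intros _. rewrite !count_upto_nonpos by lia. reflexivity.
  - intros H. rewrite !(count_upto_succ _ _ p), IH, H by (lia || intros; apply H; lia).
    reflexivity.
Qed.

Lemma count_upto_swap k c i j p : 1 <= i < j ->
  count_upto k (swap c i j) p = count_upto k c p
    + (if (i <=? p) && (p <? j) then indicator k (c j) - indicator k (c i) else 0).
Proof.
  intros Hij. induction p as [p Hp|p Hp IH] using Z_nonpos_succ_ind.
  - rewrite !count_upto_nonpos by lia. case_cmp.
  - rewrite !(count_upto_succ _ _ p), IH by lia.
    unfold swap. case_cmp; subst; lia.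
Qed.

(** [(X, Y)] is an inversion when the [Y]-th white checker stands left of the
    [X]-th black one, i.e. some prefix of the board holds at least [Y] whites
    but fewer than [X] blacks. *)
Definition inversion (L : Z) (c : config) (X Y : Z) : bool :=
  existsb (fun p => (Y <=? count_upto Wt c p) && (count_upto Bk c p <? X))
    (zrange 0 (S (Z.to_nat L))).

Lemma inversion_spec L c X Y : 0 <= L ->
  inversion L c X Y = true <->
  exists p, 0 <= p <= L /\ Y <= count_upto Wt c p /\ count_upto Bk c p < X.
Proof.
  intros HL. unfold inversion. rewrite existsb_exists.
  split; intros [p [Hp H]]; exists p; rewrite in_zrange in *;
    rewrite ?andb_true_iff, ?Z.leb_le, ?Z.ltb_lt in *; lia.
Qed.

Definition is_prefix_count (L : Z) (c : config) (b w : Z) : Prop :=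
  exists q, 0 <= q <= L /\ count_upto Bk c q = b /\ count_upto Wt c q = w.

Lemma inversion_sub L c c' X Y : 0 <= L ->
  (forall p, 0 <= p <= L ->
     is_prefix_count L c (count_upto Bk c' p) (count_upto Wt c' p)) ->
  inversion L c' X Y = true -> inversion L c X Y = true.
Proof.
  intros HL Hsub. rewrite !inversion_spec by exact HL.
  intros [p [Hp HXY]]. destruct (Hsub p Hp) as [q [Hq [Eb Ew]]].
  exists q. lia.
Qed.

(** Going through the corner [(b0, w0+1)] instead of [(b0+1, w0)] of the unit
    square with opposite corners [(b0, w0)] and [(b0+1, w0+1)] creates only the
    inversion [(b0+1, w0+1)]. *)
Lemma inversion_sub_corner L c c' b0 w0 X Y : 0 <= L ->
  is_prefix_count L c b0 w0 -> is_prefix_count L c (b0 + 1) (w0 + 1) ->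
  (forall p, 0 <= p <= L ->
     is_prefix_count L c (count_upto Bk c' p) (count_upto Wt c' p)
     \/ (count_upto Bk c' p = b0 + 1 /\ count_upto Wt c' p = w0)
     \/ (count_upto Bk c' p = b0 /\ count_upto Wt c' p = w0 + 1)) ->
  inversion L c' X Y = true -> inversion L c X Y = true \/ (X = b0 + 1 /\ Y = w0 + 1).
Proof.
  intros HL [q0 [Hq0 [Eb0 Ew0]]] [q1 [Hq1 [Eb1 Ew1]]] Hsub.
  rewrite !inversion_spec by exact HL.
  intros [p [Hp HXY]].
  destruct (Hsub p Hp) as [[q [Hq [Eb Ew]]] | [[Eb Ew] | [Eb Ew]]].
  - left. exists q. lia.
  - left. exists q0. lia.
  - destruct (Z.le_gt_cases Y w0); [left; exists q0; lia|].
    destruct (Z.le_gt_cases X (b0 + 1)); [right; lia|].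
    left. exists q1. lia.
Qed.

Ltac expand_counts c p :=
  let Hb := fresh "Hb" in let Hw := fresh "Hw" in
  assert (Hb := count_upto_succ Bk c p ltac:(lia));
  assert (Hw := count_upto_succ Wt c p ltac:(lia)).

Lemma slide_prefix_counts L c i : 1 <= i -> i + 1 <= L -> (c i = Vac \/ c (i + 1) = Vac) ->
  forall p, 0 <= p <= L ->
  is_prefix_count L c (count_upto Bk (swap c i (i + 1)) p) (count_upto Wt (swap c i (i + 1)) p).
Proof.
  intros Hi HiL Hvac p Hp. rewrite !count_upto_swap by lia.
  destruct (Z.eqb_spec p i) as [->|Hpi]; case_cmp; try (exists p; split; [lia|]; split; lia).
  expand_counts c i. expand_counts c (i + 1). replace (i + 1 - 1) with i in * by lia.
  destruct Hvac as [E|E]; rewrite E in *; cbn [indicator] in *.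
  - exists (i + 1). lia.
  - exists (i - 1). lia.
Qed.

Ltac expand_jump_window c i :=
  expand_counts c i; expand_counts c (i + 1); expand_counts c (i + 2);
  replace (i + 1 - 1) with i in * by lia; replace (i + 2 - 1) with (i + 1) in * by lia.

(* Inside the window, the prefix counts of [c] and of the swapped configuration
   are read off from those of [c] at [i - 1 .. i + 2]. *)
Ltac solve_window c i :=
  destruct (c i), (c (i + 1)), (c (i + 2)); cbn [indicator] in *;
  try (intuition congruence);
  first [ exists (i - 1); lia | exists i; lia | exists (i + 1); lia | exists (i + 2); lia ].

Lemma jump_same_prefix_counts L c i : 1 <= i -> i + 2 <= L ->
  (c i = Vac /\ c (i + 2) <> Vac \/ c (i + 2) = Vac /\ c i <> Vac) ->
  c (i + 1) = c i \/ c (i + 1) = c (i + 2) ->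
  forall p, 0 <= p <= L ->
  is_prefix_count L c (count_upto Bk (swap c i (i + 2)) p) (count_upto Wt (swap c i (i + 2)) p).
Proof.
  intros Hi HiL Hvac Hsame p Hp. rewrite !count_upto_swap by lia.
  case_cmp; try (exists p; split; [lia|]; split; lia).
  expand_jump_window c i.
  assert (p = i \/ p = i + 1) as [-> | ->] by lia; solve_window c i.
Qed.

Lemma jump_diff_prefix_counts L c i : 1 <= i -> i + 2 <= L ->
  (c i = Vac /\ c (i + 2) <> Vac \/ c (i + 2) = Vac /\ c i <> Vac) -> c (i + 1) <> Vac ->
  c (i + 1) <> c i -> c (i + 1) <> c (i + 2) ->
  let b0 := count_upto Bk c (i - 1) in let w0 := count_upto Wt c (i - 1) in
  is_prefix_count L c b0 w0 /\ is_prefix_count L c (b0 + 1) (w0 + 1) /\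
  forall p, 0 <= p <= L ->
    is_prefix_count L c (count_upto Bk (swap c i (i + 2)) p) (count_upto Wt (swap c i (i + 2)) p)
    \/ (count_upto Bk (swap c i (i + 2)) p = b0 + 1 /\ count_upto Wt (swap c i (i + 2)) p = w0)
    \/ (count_upto Bk (swap c i (i + 2)) p = b0 /\ count_upto Wt (swap c i (i + 2)) p = w0 + 1).
Proof.
  intros Hi HiL Hvac Hmid Hdl Hdr b0 w0. subst b0 w0.
  expand_jump_window c i. split; [|split].
  - exists (i - 1). lia.
  - solve_window c i.
  - intros p Hp. rewrite !count_upto_swap by lia.
    case_cmp; try (left; exists p; split; [lia|]; split; lia).
    assert (p = i \/ p = i + 1) as [-> | ->] by lia;
      destruct (c i), (c (i + 1)), (c (i + 2)); cbn [indicator] in *; try (intuition congruence);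
      first [ right; left; lia | right; right; lia
            | left; first [ exists (i - 1); lia | exists i; lia | exists (i + 1); lia
                          | exists (i + 2); lia ] ].
Qed.

Lemma inversion_slide L c i X Y : 1 <= i -> i + 1 <= L -> (c i = Vac \/ c (i + 1) = Vac) ->
  inversion L (swap c i (i + 1)) X Y = inversion L c X Y.
Proof.
  intros Hi HiL Hvac. apply eq_true_iff_eq. split; apply inversion_sub; try lia.
  - now apply slide_prefix_counts.
  - intros p Hp. rewrite <- (swap_involutive c i (i + 1)) at 2 3.
    apply slide_prefix_counts; try lia. rewrite swap_l, swap_r by lia. tauto.
Qed.

Lemma inversion_jump_sub L c i X Y : 1 <= i -> i + 2 <= L ->
  (c i = Vac /\ c (i + 2) <> Vac \/ c (i + 2) = Vac /\ c i <> Vac) -> c (i + 1) <> Vac ->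
  inversion L (swap c i (i + 2)) X Y = true ->
  inversion L c X Y = true
  \/ (c (i + 1) <> c i /\ c (i + 1) <> c (i + 2)
      /\ X = count_upto Bk c (i - 1) + 1 /\ Y = count_upto Wt c (i - 1) + 1).
Proof.
  intros Hi HiL Hends Hmid Hinv.
  destruct (cell_eq_dec (c (i + 1)) (c i)) as [Hl|Hl];
    [|destruct (cell_eq_dec (c (i + 1)) (c (i + 2))) as [Hr|Hr]].
  1, 2: left; revert Hinv; apply inversion_sub; [lia|]; apply jump_same_prefix_counts; auto; lia.
  destruct (jump_diff_prefix_counts L c i) as [H0 [H1 Hsub]]; auto; try lia.
  destruct (inversion_sub_corner L c _ _ _ X Y ltac:(lia) H0 H1 Hsub Hinv); [left|right]; tauto.
Qed.

Lemma inversion_jump L c i X Y : 1 <= i -> i + 2 <= L ->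
  (c i = Vac /\ c (i + 2) <> Vac \/ c (i + 2) = Vac /\ c i <> Vac) -> c (i + 1) <> Vac ->
  (c (i + 1) = c i \/ c (i + 1) = c (i + 2)
   \/ X <> count_upto Bk c (i - 1) + 1 \/ Y <> count_upto Wt c (i - 1) + 1) ->
  inversion L (swap c i (i + 2)) X Y = inversion L c X Y.
Proof.
  intros Hi HiL Hends Hmid Hexc. apply eq_true_iff_eq. split; intros Hinv.
  - destruct (inversion_jump_sub L c i X Y) as [H|H]; auto; tauto.
  - rewrite <- (swap_involutive c i (i + 2)) in Hinv.
    assert (Hcount : forall k, count_upto k (swap c i (i + 2)) (i - 1) = count_upto k c (i - 1))
      by (intros k; rewrite count_upto_swap by lia; case_cmp; lia).
    destruct (inversion_jump_sub L (swap c i (i + 2)) i X Y) as [H|H]; auto;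
      rewrite ?swap_l, ?swap_r, ?swap_other, ?Hcount in * by lia; tauto.
Qed.

Definition level (c : config) (v : Z) : Z := count_upto Bk c v - count_upto Wt c v.

Lemma level_jump_diff c i v x : 1 <= i -> (v = i /\ x = i + 2 \/ v = i + 2 /\ x = i) ->
  c v = Vac -> c x <> Vac -> c (i + 1) <> Vac -> c (i + 1) <> c x ->
  level (swap c i (i + 2)) x = count_upto Bk c (i - 1) - count_upto Wt c (i - 1) /\
  level c v = count_upto Bk c (i - 1) - count_upto Wt c (i - 1).
Proof.
  intros Hi Hvx Hv Hx Hmid Hdiff. unfold level. rewrite !count_upto_swap by lia.
  expand_jump_window c i.
  destruct Hvx as [[-> ->] | [-> ->]]; case_cmp; rewrite Hv in *;
    destruct (c i), (c (i + 1)), (c (i + 2)); cbn [indicator] in *; try congruence; lia.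
Qed.

(** * The potential *)

Section Potential.

Variables n m L : Z.

Definition checker_pairs : list (Z * Z) :=
  list_prod (zrange 1 (Z.to_nat n)) (zrange 1 (Z.to_nat m)).

Definition pending_pairs (c : config) : list (Z * Z) :=
  filter (fun '(X, Y) => negb (inversion L c X Y)) checker_pairs.

(** The jump settling a pending pair [(X, Y)] is made with the vacancy at
    level [X - Y]. *)
Definition pending_levels (c : config) (v : Z) : list Z :=
  filter (fun l => (l =? level c v) || (l =? - m)
                   || existsb (fun '(X, Y) => X - Y =? l) (pending_pairs c))
    (zrange (- m) (Z.to_nat (n + m + 1))).

Definition potential (c : config) (v : Z) : Z :=
  Z.of_nat (length (pending_pairs c) + length (pending_levels c v)).

Lemma potential_same_inversions c c' v x :
  (forall X Y, inversion L c' X Y = inversion L c X Y) ->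
  potential c v <= potential c' x + 1.
Proof.
  intros Hinv. unfold potential.
  assert (Hpairs : pending_pairs c' = pending_pairs c).
  { apply filter_ext. intros [X Y]. now rewrite Hinv. }
  assert (Hlev : (length (pending_levels c v) <= S (length (pending_levels c' x)))%nat).
  { apply length_filter_mono_but_one with (u := level c v); [apply NoDup_zrange|].
    intros l _. rewrite Hpairs, !orb_true_iff, !Z.eqb_eq. tauto. }
  rewrite Hpairs. lia.
Qed.

Lemma potential_one_inversion c c' v x X0 Y0 :
  level c' x = level c v -> X0 - Y0 = level c v ->
  (forall X Y, X <> X0 \/ Y <> Y0 -> inversion L c' X Y = inversion L c X Y) ->
  potential c v <= potential c' x + 1.
Proof.
  intros Hlev HX0 Hinv. unfold potential.
  assert (Hpairs : (length (pending_pairs c) <= S (length (pending_pairs c')))%nat).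
  { apply length_filter_mono_but_one with (u := (X0, Y0)).
    - apply NoDup_list_prod; apply NoDup_zrange.
    - intros [X Y] _ HXY. destruct (Z.eq_dec X X0), (Z.eq_dec Y Y0); subst; auto;
        left; rewrite Hinv by tauto; exact HXY. }
  assert (Hlevels : (length (pending_levels c v) <= length (pending_levels c' x))%nat).
  { apply length_filter_mono. intros l _. rewrite !orb_true_iff, !Z.eqb_eq, Hlev.
    intros [[-> | ->] | Hex]; [tauto | tauto |].
    apply existsb_exists in Hex as [[X Y] [Hin HXY]]. apply Z.eqb_eq in HXY.
    destruct (Z.eq_dec X X0) as [EX|NX]; [destruct (Z.eq_dec Y Y0) as [EY|NY]|].
    1: left; left; lia.
    all: right; apply existsb_exists; exists (X, Y); split; [|apply Z.eqb_eq; exact HXY].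
    all: unfold pending_pairs in *; rewrite filter_In in *; rewrite Hinv by tauto; tauto. }
  lia.
Qed.

End Potential.

Lemma potential_slide n m L c i v x : 1 <= i -> i + 1 <= L ->
  (v = i /\ x = i + 1 \/ v = i + 1 /\ x = i) -> c v = Vac ->
  potential n m L c v <= potential n m L (swap c i (i + 1)) x + 1.
Proof.
  intros Hi HiL Hvx Hv. apply potential_same_inversions. intros X Y.
  apply inversion_slide; [lia | lia |]. destruct Hvx as [[-> ->] | [-> ->]]; tauto.
Qed.

Lemma potential_jump n m L c i v x : 1 <= i -> i + 2 <= L ->
  (v = i /\ x = i + 2 \/ v = i + 2 /\ x = i) -> c v = Vac -> c x <> Vac -> c (i + 1) <> Vac ->
  potential n m L c v <= potential n m L (swap c i (i + 2)) x + 1.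
Proof.
  intros Hi HiL Hvx Hv Hx Hmid.
  assert (Hends : c i = Vac /\ c (i + 2) <> Vac \/ c (i + 2) = Vac /\ c i <> Vac)
    by (destruct Hvx as [[-> ->] | [-> ->]]; tauto).
  assert (Hex : c (i + 1) = c x -> c (i + 1) = c i \/ c (i + 1) = c (i + 2))
    by (destruct Hvx as [[-> ->] | [-> ->]]; tauto).
  destruct (cell_eq_dec (c (i + 1)) (c x)) as [Hsame|Hdiff].
  - apply potential_same_inversions. intros X Y.
    apply inversion_jump; auto; try lia. specialize (Hex Hsame); tauto.
  - destruct (level_jump_diff c i v x) as [Hlev' Hlev]; auto.
    apply (potential_one_inversion _ _ _ _ _ _ _
             (count_upto Bk c (i - 1) + 1) (count_upto Wt c (i - 1) + 1)); [lia | lia |].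
    intros X Y HXY. apply inversion_jump; auto; lia.
Qed.

Lemma potential_step n m L c v x c' : single_vacancy L c -> 1 <= v <= L -> c v = Vac ->
  legal_move L c x c' ->
  single_vacancy L c' /\ 1 <= x <= L /\ c' x = Vac
  /\ potential n m L c v <= potential n m L c' x + 1.
Proof.
  intros Hsingle Hv Hcv Hmove.
  destruct (legal_move_is_swap L c v x c') as [-> [Hx [Hcx Hkind]]]; auto.
  destruct (single_vacancy_swap L c v x) as [Hsingle' Hcx']; auto.
  do 3 (split; auto).
  destruct Hkind as [Hslide | [Hjump Hmid]].
  - destruct (Z.lt_ge_cases v x).
    + replace x with (v + 1) by lia. apply potential_slide; auto; lia.
    + replace v with (x + 1) in * by lia. rewrite swap_comm. apply potential_slide; auto; lia.
  - destruct (Z.lt_ge_cases v x).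
    + replace x with (v + 2) in * by lia.
      rewrite <- (Z.div_unique_exact _ 2 (v + 1)) in Hmid by lia.
      apply potential_jump; auto; lia.
    + replace v with (x + 2) in * by lia. rewrite swap_comm.
      rewrite <- (Z.div_unique_exact _ 2 (x + 1)) in Hmid by lia.
      apply potential_jump; auto; lia.
Qed.

Lemma potential_run n m L c xs c2 : legal_run L c xs c2 ->
  forall v, single_vacancy L c -> 1 <= v <= L -> c v = Vac ->
  exists v2, 1 <= v2 <= L /\ c2 v2 = Vac /\
    potential n m L c v <= potential n m L c2 v2 + Z.of_nat (length xs).
Proof.
  induction 1 as [c | c x xs c1 c2 Hmove Hrun IH]; intros v Hsingle Hv Hcv.
  - exists v. cbn [length]. repeat split; auto; lia.
  - destruct (potential_step n m L c v x c1) as [Hsingle1 [Hx [Hcx Hstep]]]; auto.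
    destruct (IH x Hsingle1 Hx Hcx) as [v2 [Hv2 [Hcv2 Hpot]]].
    exists v2. cbn [length]. rewrite Nat2Z.inj_succ. repeat split; auto; lia.
Qed.

Lemma count_upto_init n m p : 0 <= n -> 0 <= p ->
  count_upto Bk (init_config n m) p = Z.min p n /\
  count_upto Wt (init_config n m) p = Z.max 0 (p - n - 1).
Proof.
  intros Hn. induction p as [p Hp | p Hp IH] using Z_nonpos_succ_ind; intros Hp0.
  - rewrite !count_upto_nonpos by lia. lia.
  - rewrite !(count_upto_succ _ _ p) by lia. destruct (Z.eq_dec p 0) as [->|]; [lia|].
    destruct IH as [IHb IHw]; [lia|]. rewrite IHb, IHw.
    unfold init_config. case_cmp; cbn [indicator]; lia.
Qed.

Lemma count_upto_final n m c p : 0 <= m -> 0 <= p <= n + m + 1 ->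
  same_on_board (n + m + 1) c (final_config n m) ->
  count_upto Wt c p = Z.min p m /\ count_upto Bk c p = Z.max 0 (p - m - 1).
Proof.
  intros Hm Hp Hfinal. rewrite !(count_upto_ext _ c (final_config n m) p)
    by (intros q Hq; apply Hfinal; lia).
  clear Hfinal. destruct Hp as [Hp _]. revert Hp.
  induction p as [p Hp | p Hp IH] using Z_nonpos_succ_ind; intros Hp0.
  - rewrite !count_upto_nonpos by lia. lia.
  - rewrite !(count_upto_succ _ _ p) by lia. destruct (Z.eq_dec p 0) as [->|]; [lia|].
    destruct IH as [IHw IHb]; [lia|]. rewrite IHb, IHw.
    unfold final_config. case_cmp; cbn [indicator]; lia.
Qed.

Lemma potential_init n m : 1 <= m <= n ->
  n * m + n + m + 1 <= potential n m (n + m + 1) (init_config n m) (n + 1).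
Proof.
  intros Hnm. unfold potential.
  assert (Hnoinv : forall X Y, 1 <= X <= n -> 1 <= Y <= m ->
            inversion (n + m + 1) (init_config n m) X Y = false).
  { intros X Y HX HY. apply not_true_iff_false. rewrite inversion_spec by lia.
    intros [p [Hp HXY]]. destruct (count_upto_init n m p) as [Hb Hw]; lia. }
  assert (Hpairs : pending_pairs n m (n + m + 1) (init_config n m) = checker_pairs n m).
  { rewrite <- filter_true. apply filter_ext_in. intros [X Y] Hin.
    unfold checker_pairs in Hin. rewrite in_prod_iff, !in_zrange in Hin.
    rewrite Hnoinv by lia. reflexivity. }
  assert (Hlevels : pending_levels n m (n + m + 1) (init_config n m) (n + 1)
                    = zrange (- m) (Z.to_nat (n + m + 1))).
  { rewrite <- (filter_true (zrange _ _)). apply filter_ext_in.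
    intros l Hl. rewrite in_zrange in Hl.
    unfold level. destruct (count_upto_init n m (n + 1)) as [-> ->]; try lia.
    destruct (Z.eqb_spec l (Z.min (n + 1) n - Z.max 0 (n + 1 - n - 1))); [reflexivity|].
    destruct (Z.eqb_spec l (- m)); [reflexivity|]. cbn [orb].
    apply existsb_exists. rewrite Hpairs.
    destruct (Z.ltb_spec l 0); [exists (1, 1 - l) | exists (l + 1, 1)];
      unfold checker_pairs; rewrite in_prod_iff, !in_zrange, Z.eqb_eq; lia. }
  rewrite Hpairs, Hlevels. unfold checker_pairs. rewrite length_prod, !length_zrange. lia.
Qed.

Lemma potential_final n m c : 1 <= m <= n -> same_on_board (n + m + 1) c (final_config n m) ->
  potential n m (n + m + 1) c (m + 1) <= 1.
Proof.
  intros Hnm Hfinal. unfold potential.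
  assert (Hpairs : pending_pairs n m (n + m + 1) c = nil).
  { rewrite <- (filter_false (checker_pairs n m)). apply filter_ext_in. intros [X Y] Hin.
    unfold checker_pairs in Hin. rewrite in_prod_iff, !in_zrange in Hin.
    apply negb_false_iff. rewrite inversion_spec by lia. exists m.
    destruct (count_upto_final n m c m) as [Hw Hb]; auto; lia. }
  assert (Hlevels : (length (pending_levels n m (n + m + 1) c (m + 1))
           <= S (length (filter (fun _ => false) (zrange (- m) (Z.to_nat (n + m + 1))))))%nat).
  { apply length_filter_mono_but_one with (u := - m); [apply NoDup_zrange|].
    intros l _ Hl. rewrite Hpairs in Hl. unfold level in Hl.
    destruct (count_upto_final n m c (m + 1)) as [Hw Hb]; auto; try lia.
    cbn [existsb] in Hl. rewrite orb_false_r, orb_true_iff, !Z.eqb_eq in Hl. lia. }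
  rewrite Hpairs, filter_false in *. cbn [length] in *. lia.
Qed.

Lemma legal_run_length_ge n m xs c : 1 <= m <= n ->
  legal_run (n + m + 1) (init_config n m) xs c ->
  same_on_board (n + m + 1) c (final_config n m) ->
  n * m + n + m <= Z.of_nat (length xs).
Proof.
  intros Hnm Hrun Hfinal.
  assert (Hsingle : single_vacancy (n + m + 1) (init_config n m)).
  { intros p q Hp Hq. unfold init_config. case_cmp; congruence. }
  destruct (potential_run n m _ _ _ _ Hrun (n + 1) Hsingle) as [v2 [Hv2 [Hcv2 Hpot]]];
    [lia | unfold init_config; case_cmp |].
  assert (v2 = m + 1) as ->.
  { rewrite Hfinal in Hcv2 by lia. unfold final_config in Hcv2. case_cmp; congruence. }
  pose proof (potential_init n m Hnm). pose proof (potential_final n m c Hnm Hfinal). lia.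
Qed.

Theorem theorem3 (n m d : Z) :
  1 <= m -> m <= n -> (d = 1 \/ d = -1) ->
  let N := n * m + n + m in
  let L := n + m + 1 in
  (exists c, legal_run L (init_config n m) (xlist n m d (Z.to_nat N)) c /\
             same_on_board L c (final_config n m)) /\
  (forall xs c, legal_run L (init_config n m) xs c ->
                same_on_board L c (final_config n m) ->
                N <= Z.of_nat (length xs)) /\
  d = (n + 1) - xseq n m d 1.
Proof.
  intros Hm Hmn Hd N L. split; [|split].
  - apply legal_run_xlist; auto.
  - intros xs c Hrun Hfinal. apply (legal_run_length_ge n m xs c); auto.
  - rewrite xseq_first by assumption. ring.
Qed.
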